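(* Let $\lambda\in(0,1)$ and let $n$ be a positive integer. If $G$ is a graph that maximizes $Mc^{e}_{\lambda}(G)$ among all finite simple connected graphs with $n$ vertices, then $G$ is a tree.
   Context: $d(u,v)$ denotes graph distance and $[u]$ the set of neighbours of $u$. For vertices $k,l$, $s^{kl}$ is the number of shortest $k$–$l$ paths and, for an edge $uv$, $s^{kl}_{uv}$ is the number of those passing through the edge $uv$. The exponential edge betweenness of an edge $uv$ is $b^{e}_{\lambda}(uv)=\sum_{\{k,l\}}\frac{s^{kl}_{uv}}{s^{kl}}\lambda^{d(k,l)}$ over all unordered pairs $\{k,l\}$ of distinct vertices; the exponential betweenness centrality of a vertex $u$ is $c^{e}_{\lambda}(u)=\sum_{v\in[u]}b^{e}_{\lambda}(uv)$; and $Mc^{e}_{\lambda}(G)=\max\{c^{e}_{\lambda}(u):u\in V(G)\}$. *)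

From HB Require Import structures.
From mathcomp Require Import all_boot all_order all_algebra.
From mathcomp Require Import reals.
Set Implicit Arguments. Unset Strict Implicit. Unset Printing Implicit Defensive.
Import Order.TTheory GRing.Theory Num.Theory.
Local Open Scope ring_scope.

Section Graphs.
Variable T : finType.
Implicit Types (e : rel T) (k l u v : T).

Definition simple_graph e : Prop := symmetric e /\ irreflexive e.

Definition connected_graph e : Prop := forall k l, connect e k l.

Definition is_tree e : Prop :=
  connected_graph e /\ ~ (exists c : seq T, (2 < size c)%N && ucycleb e c).

(* walks of length m from k to l: the m vertices after k, as an m-tuple *)
Definition walks e m k l : {set m.-tuple T} :=
  [set t : m.-tuple T | path e k t && (last k t == l)].

(* graph distance: least m with a walk of length m (for connected graphs
   this is < #|T|) *)
Definition dist e k l : nat :=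
  find (fun m => 0 < #|walks e m k l|)%N (iota 0 #|T|).

Definition sp e k l : {set (dist e k l).-tuple T} := walks e (dist e k l) k l.

Definition s_num e k l : nat := #|sp e k l|.

Definition uses_edge k (t : seq T) u v : bool :=
  has (fun p => (p == (u, v)) || (p == (v, u))) (zip (k :: t) t).

Definition s_edge e k l u v : nat :=
  #|[set t in sp e k l | uses_edge k t u v]|.

Variable R : realType.

(* exponential edge betweenness: sum over unordered pairs {k,l}, k <> l,
   each pair taken once via the enumeration order of T *)
Definition edge_betw (lam : R) e u v : R :=
  \sum_(k : T) \sum_(l : T | (enum_rank k < enum_rank l)%N)
     (s_edge e k l u v)%:R / (s_num e k l)%:R * lam ^+ dist e k l.

Definition exp_centr (lam : R) e u : R := \sum_(v : T | e u v) edge_betw lam e u v.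

(* Mc: maximum over vertices (all values are >= 0, so 0 is a neutral seed) *)
Definition Mc (lam : R) e : R := \big[Num.max/0]_(u : T) exp_centr lam e u.

End Graphs.

From HB Require Import structures.
From mathcomp Require Import all_boot all_order all_algebra.
From mathcomp Require Import reals.
Import Order.TTheory GRing.Theory Num.Theory.
Set Implicit Arguments. Unset Strict Implicit. Unset Printing Implicit Defensive.

(* Write the centrality of a vertex [u] as a sum over unordered pairs {k, l}.
   A shortest k-l path without repeated vertices meets [u] in at most two
   edges, and in at most one if [u] is k or l; hence the pair contributes at
   most [lam] if [u] is an endpoint (then d(k,l) >= 1) and at most [2 lam^2]
   otherwise (the contribution vanishes when d(k,l) <= 1).  The star centred
   at [u] attains all these bounds.  If a maximizer had a cycle, then for a
   vertex [u] of maximal centrality some edge {x, y} of the cycle avoids [u];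
   the pair {x, y} contributes nothing at [u], so
   Mc(G) = c(u) < c_star(u) <= Mc(star), a contradiction. *)

Section Distance.
Variables (T : finType) (e : rel T).
Implicit Types (k l : T) (p : seq T).

Lemma dist_le_size k l p : path e k p -> last k p = l -> size p < #|T| ->
  dist e k l <= size p.
Proof.
move=> pp lp sz; rewrite /dist leqNgt; apply/negP => /(before_find 0).
rewrite nth_iota // add0n => /negP; apply; apply/card_gt0P.
by exists (in_tuple p); rewrite inE pp lp eqxx.
Qed.

Lemma dist_le_card k l : dist e k l <= #|T|.
Proof. by rewrite /dist -[leqRHS](size_iota 0) find_size. Qed.

Lemma card_walks_dist_gt0 k l : dist e k l < #|T| -> 0 < #|walks e (dist e k l) k l|.
Proof.
move=> lt_dT; have := @nth_find _ 0 (fun m => 0 < #|walks e m k l|) (iota 0 #|T|).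
by rewrite nth_iota // add0n; apply; rewrite has_find size_iota.
Qed.

Lemma leq_dist k l m : (forall i, i < m -> walks e i k l = set0) -> m <= #|T| ->
  m <= dist e k l.
Proof.
move=> no_walk le_mT; rewrite leqNgt; apply/negP => lt_dm.
by have := card_walks_dist_gt0 (leq_trans lt_dm le_mT); rewrite no_walk // cards0.
Qed.

Lemma walks0 k l : k != l -> walks e 0 k l = set0.
Proof. by move=> kl; apply/setP => t; rewrite !inE tuple0 /= (negbTE kl). Qed.

Lemma walks1 k l : ~~ e k l -> walks e 1 k l = set0.
Proof.
move=> nkl; apply/setP => t; rewrite !inE; case/tupleP: t => a t.
by rewrite tuple0 /= andbT; apply/andP => -[ka /eqP al]; rewrite -al ka in nkl.
Qed.

Lemma dist_gt0 k l : k != l -> 0 < dist e k l.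
Proof.
move=> kl; apply: leq_dist => [[|//] _|]; first exact: walks0.
by apply/card_gt0P; exists k.
Qed.

Lemma dist_gt1 k l : k != l -> ~~ e k l -> 1 < dist e k l.
Proof.
move=> kl nkl; apply: leq_dist => [[|[|//]] _|]; [exact: walks0|exact: walks1|].
by apply/card_gt1P; exists k, l.
Qed.

Lemma dist_edge k l : k != l -> e k l -> dist e k l <= 1.
Proof.
move=> kl ekl; apply: (@dist_le_size _ _ [:: l]); rewrite /= ?ekl //.
by apply/card_gt1P; exists k, l.
Qed.

Lemma dist_lt_card k l : connect e k l -> dist e k l < #|T|.
Proof.
case/connectP=> p pp; case: (shortenP pp) => p' pp' up' _ lp'.
have lt_p'T : size p' < #|T| by have := max_card (mem (k :: p')); rewrite (card_uniqP up').
exact: leq_ltn_trans (dist_le_size pp' (esym lp') lt_p'T) lt_p'T.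
Qed.

Lemma s_num_gt0 k l : connect e k l -> 0 < s_num e k l.
Proof. by move/dist_lt_card; apply: card_walks_dist_gt0. Qed.

Lemma shortest_path_uniq k l (t : (dist e k l).-tuple T) :
  t \in sp e k l -> uniq (k :: t).
Proof.
rewrite inE => /andP[pt lt]; apply/negPn/negP => not_uniq; move: lt.
case: (shortenP pt) => p' pp' up' sub_p' /eqP lp'.
have lt_p't : size p' < size t.
  rewrite ltnNge; apply/negP => le_tp'; case/negP: not_uniq.
  apply: (leq_size_uniq up' (s2 := k :: t)); last by rewrite /= ltnS.
  by move=> z; rewrite !inE; case/orP=> [->//|/sub_p' ->]; rewrite orbT.
rewrite size_tuple in lt_p't.
have := dist_le_size pp' lp' (leq_trans lt_p't (dist_le_card k l)).
by rewrite leqNgt lt_p't.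
Qed.

End Distance.

Section EdgeUse.
Variable T : finType.
Implicit Types (k u w : T) (b t : seq T).

Lemma zip_cons_belast k t : zip (k :: t) t = zip (belast k t) t.
Proof. by elim: t k => [|a t IHt] k //=; rewrite IHt. Qed.

Lemma mem_zip b t u w : (u, w) \in zip b t -> u \in b /\ w \in t.
Proof.
elim: b t => [|x b IHb] [|y t] //=; rewrite in_cons.
by case/orP=> [/eqP[-> ->]|/IHb[ub wt]]; rewrite !in_cons ?eqxx ?ub ?wt ?orbT.
Qed.

Lemma mem_zip_uniql b t u w : uniq b -> (u, w) \in zip b t ->
  w = nth u t (index u b).
Proof.
elim: b t => [|x b IHb] [|y t] //= /andP[xb ub]; rewrite in_cons.
case/orP=> [/eqP[-> ->]|uw_bt]; first by rewrite eqxx.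
have [u_b _] := mem_zip uw_bt.
have xu : (x == u) = false by apply: contraNF xb => /eqP->.
by rewrite xu (IHb _ ub uw_bt).
Qed.

Lemma mem_zip_uniqr b t u w : uniq t -> (w, u) \in zip b t ->
  w = nth u b (index u t).
Proof.
elim: t b => [|y t IHt] [|x b] //= /andP[yt ut]; rewrite in_cons.
case/orP=> [/eqP[-> ->]|wu_bt]; first by rewrite eqxx.
have [_ u_t] := mem_zip wu_bt.
have yu : (y == u) = false by apply: contraNF yt => /eqP->.
by rewrite yu (IHt _ ut wu_bt).
Qed.

(* On a path without repeated vertices [u] has at most one successor and one
   predecessor, and an endpoint lacks one of the two. *)
Lemma card_uses_edge k t u : uniq (k :: t) ->
  #|[pred w | uses_edge k t u w]| <= (if (u == k) || (u == last k t) then 1 else 2).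
Proof.
move=> uniq_kt.
have /andP[uniq_b last_b] : uniq (belast k t) && (last k t \notin belast k t).
  by move: uniq_kt; rewrite lastI rcons_uniq andbC.
have /andP[k_t uniq_t] : (k \notin t) && uniq t by [].
set w_next := nth u t (index u (belast k t)).
set w_prev := nth u (belast k t) (index u t).
have uses_zip w : uses_edge k t u w ->
    ((u, w) \in zip (belast k t) t) || ((w, u) \in zip (belast k t) t).
  rewrite /uses_edge zip_cons_belast => /hasP[q q_in].
  by case/orP=> /eqP q_eq; rewrite -q_eq q_in ?orbT.
case: ifP => [/orP[/eqP uk|/eqP ul]|_].
- rewrite -(card1 w_next); apply/subset_leq_card/subsetP => w.
  rewrite !inE => /uses_zip /orP[uw|wu]; first exact/eqP/mem_zip_uniql.
  by have [_] := mem_zip wu; rewrite uk (negbTE k_t).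
- rewrite -(card1 w_prev); apply/subset_leq_card/subsetP => w.
  rewrite !inE => /uses_zip /orP[uw|wu]; last exact/eqP/mem_zip_uniqr.
  by have [] := mem_zip uw; rewrite ul (negbTE last_b).
- apply: leq_trans (card_size [:: w_next; w_prev]).
  apply/subset_leq_card/subsetP => w; rewrite !inE.
  by case/uses_zip/orP=> [/mem_zip_uniql->|/mem_zip_uniqr->]; rewrite ?eqxx ?orbT.
Qed.

Lemma uses_edge_short k t u w : size t <= 1 -> u != k -> u != last k t ->
  ~~ uses_edge k t u w.
Proof.
case: t => [|a [|//]] //= _ uk ua.
by rewrite /uses_edge /= !xpair_eqE orbF eq_sym (negbTE uk) [a == u]eq_sym (negbTE ua) andbF.
Qed.

End EdgeUse.

Section EdgeCounts.
Variables (T : finType) (e : rel T).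
Implicit Types (k l u v : T) (P : pred T).

Lemma sum_s_edge P k l u :
  \sum_(v | P v) s_edge e k l u v =
  \sum_(t in sp e k l) #|[pred v | P v && uses_edge k t u v]|.
Proof.
rewrite /s_edge; under eq_bigr => v _ do rewrite -sum1_card.
under [RHS]eq_bigr => t _ do rewrite -sum1_card.
rewrite (exchange_big_dep (mem (sp e k l))) /=; last by move=> v t _; rewrite inE => /andP[].
by apply: eq_bigr => t t_sp; apply: eq_bigl => v; rewrite in_set t_sp inE.
Qed.

Lemma sum_s_edge_le P k l u : k != l ->
  \sum_(v | P v) s_edge e k l u v <=
  (if (u == k) || (u == l) then 1 else 2) * s_num e k l.
Proof.
move=> kl; rewrite sum_s_edge /s_num -sum1_card big_distrr /=.
apply: leq_sum => t t_sp; rewrite muln1.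
have /andP[_ /eqP lt] : path e k t && (last k t == l) by move: t_sp; rewrite inE.
have := card_uses_edge u (shortest_path_uniq t_sp); rewrite lt; apply: leq_trans.
by apply/subset_leq_card/subsetP => w; rewrite !inE => /andP[].
Qed.

Lemma sum_s_edge_ge P k l u c :
  (forall t, t \in sp e k l -> c <= #|[pred v | P v && uses_edge k t u v]|) ->
  c * s_num e k l <= \sum_(v | P v) s_edge e k l u v.
Proof.
move=> c_le; rewrite sum_s_edge /s_num -sum1_card big_distrr /=.
by apply: leq_sum => t t_sp; rewrite muln1 c_le.
Qed.

Lemma s_edge_short k l u v : dist e k l <= 1 -> u != k -> u != l ->
  s_edge e k l u v = 0.
Proof.
move=> d_le1 uk ul; apply/eqP; rewrite cards_eq0; apply/eqP/setP => t.
rewrite !inE; apply/negP => /andP[/andP[_ /eqP lt]].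
by apply/negP/uses_edge_short; rewrite ?size_tuple ?lt.
Qed.

End EdgeCounts.

Section Star.
Variable T : finType.
Implicit Types (k l u : T).

Definition star u : rel T := fun x y => (x != y) && ((x == u) || (y == u)).

Lemma star_simple u : simple_graph (star u).
Proof. by split=> [x y|x]; rewrite /star ?eqxx // eq_sym orbC. Qed.

Lemma star_connected u : connected_graph (star u).
Proof.
have to_centre k : connect (star u) k u /\ connect (star u) u k.
  have [->|ku] := eqVneq k u; first by split; apply: connect0.
  by split; apply: connect1; rewrite /star ?ku 1?eq_sym ?ku eqxx ?orbT.
by move=> k l; apply: connect_trans (proj1 (to_centre k)) (proj2 (to_centre l)).
Qed.

Lemma dist_star u k l : k != l ->
  dist (star u) k l = if (u == k) || (u == l) then 1 else 2.
Proof.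
move=> kl; case: ifP => [u_kl|/norP[uk ul]]; apply/eqP; rewrite eqn_leq.
  by rewrite dist_gt0 // dist_edge // /star kl ![_ == u]eq_sym.
have card_T_gt2 : 2 < #|T|.
  apply: leq_trans (max_card (mem [:: k; l; u])).
  by rewrite (card_uniqP _) //= !inE negb_or kl ![_ == u]eq_sym uk ul.
rewrite dist_gt1 ?andbT //; last by rewrite /star kl ![_ == u]eq_sym (negbTE uk) (negbTE ul).
by apply: (@dist_le_size _ _ _ _ [:: u; l]); rewrite //= /star !eqxx !orbT eq_sym uk ul.
Qed.

Lemma sum_s_edge_star_ge u k l : k != l ->
  (if (u == k) || (u == l) then 1 else 2) * s_num (star u) k l <=
  \sum_(v | star u u v) s_edge (star u) k l u v.
Proof.
move=> kl; apply: sum_s_edge_ge => t; rewrite inE.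
have : size t = if (u == k) || (u == l) then 1 else 2 by rewrite size_tuple dist_star.
case: ifP => [u_kl|/norP[uk ul]]; case: (tval t) => [|a [|b [|//]]] //= _.
  case/andP=> _ /eqP ->; apply/card_gt0P.
  case/orP: u_kl => /eqP uE; subst u; [exists l | exists k];
    by rewrite !inE /star /uses_edge /= !eqxx ?orbT ?andbT // eq_sym.
case/andP=> /and3P[k_a _ _] /eqP ->.
have -> : a = u by move: k_a; rewrite /star [k == u]eq_sym (negbTE uk) => /andP[_ /eqP].
apply/card_gt1P; exists k, l.
by rewrite !inE /star /uses_edge /= !eqxx uk ul !orbT.
Qed.

End Star.

Section PairContributions.
Variables (T : finType) (R : realType) (lam : R).
Local Open Scope ring_scope.
Hypothesis lam01 : 0 < lam < 1.
Implicit Types (e : rel T) (k l u x y : T).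

Definition pair_centr e u k l : R :=
  \sum_(v | e u v) (s_edge e k l u v)%:R / (s_num e k l)%:R * lam ^+ dist e k l.

Definition pair_bound u k l : R := if (u == k) || (u == l) then lam else 2 * lam ^+ 2.

Lemma exp_centr_pairs e u : exp_centr lam e u =
  \sum_k \sum_(l | (enum_rank k < enum_rank l)%N) pair_centr e u k l.
Proof. by rewrite /exp_centr exchange_big; apply: eq_bigr => k _; rewrite exchange_big. Qed.

Lemma pair_centrE e u k l : pair_centr e u k l =
  (\sum_(v | e u v) s_edge e k l u v)%N%:R / (s_num e k l)%:R * lam ^+ dist e k l.
Proof. by rewrite /pair_centr natr_sum -!mulr_suml. Qed.

Lemma lam_ge0 : 0 <= lam.
Proof. by case/andP: lam01 => /ltW. Qed.

Lemma lam_exp_le m d : (m <= d)%N -> lam ^+ d <= lam ^+ m.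
Proof.
move=> le_md; rewrite -(subnKC le_md) exprD ler_piMr ?exprn_ge0 ?lam_ge0 //.
by rewrite exprn_ile1 ?lam_ge0 //; case/andP: lam01 => _ /ltW.
Qed.

Lemma ler_divr_nat (N s c : nat) : (N <= c * s)%N -> N%:R / s%:R <= c%:R :> R.
Proof.
case: s => [|s]; first by rewrite invr0 mulr0.
by move=> le_Ncs; rewrite ler_pdivrMr ?ltr0Sn // -natrM ler_nat.
Qed.

Lemma ler_pdivl_nat (N s c : nat) : (0 < s)%N -> (c * s <= N)%N -> c%:R <= N%:R / s%:R :> R.
Proof. by move=> s_gt0 le_csN; rewrite ler_pdivlMr ?ltr0n // -natrM ler_nat. Qed.

Lemma pair_centr_le_bound e u k l : k != l -> pair_centr e u k l <= pair_bound u k l.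
Proof.
move=> kl; rewrite pair_centrE /pair_bound.
have ratio_ge0 n : 0 <= n%:R / (s_num e k l)%:R :> R by rewrite divr_ge0.
have := sum_s_edge_le e (e u) u kl; case: ifP => [u_kl|/norP[uk ul]] le_sum.
  rewrite -[leRHS]mul1r ler_pM ?ratio_ge0 ?exprn_ge0 ?lam_ge0 //.
    by have := ler_divr_nat le_sum; rewrite mulr1n.
  by rewrite -[leRHS]expr1 lam_exp_le ?dist_gt0.
have [d_le1|d_gt1] := leqP (dist e k l) 1.
  rewrite big1 ?mul0r ?mulr_ge0 ?exprn_ge0 ?lam_ge0 // => v _.
  exact: s_edge_short.
by rewrite ler_pM ?ratio_ge0 ?exprn_ge0 ?lam_ge0 ?lam_exp_le ?ler_divr_nat.
Qed.

Lemma pair_centr_edge e u x y : x != y -> u != x -> u != y -> e x y ->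
  pair_centr e u x y = 0.
Proof.
move=> xy ux uy exy; rewrite /pair_centr big1 // => v _.
by rewrite s_edge_short ?dist_edge ?mul0r.
Qed.

Lemma pair_bound_gt0 u k l : 0 < pair_bound u k l.
Proof.
by case/andP: lam01 => lam_gt0 _; rewrite /pair_bound; case: ifP; rewrite ?mulr_gt0 ?exprn_gt0.
Qed.

Lemma pair_centr_star u k l : k != l -> pair_centr (star u) u k l = pair_bound u k l.
Proof.
move=> kl; apply/le_anti; rewrite pair_centr_le_bound //=.
have s_gt0 := s_num_gt0 (star_connected u k l).
have := sum_s_edge_star_ge u kl; rewrite pair_centrE /pair_bound dist_star //.
case: ifP => _ le_sum; [rewrite expr1 -[leLHS]mul1r|]; apply: ler_wpM2r;
  rewrite ?exprn_ge0 ?lam_ge0 //.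
- by have := ler_pdivl_nat s_gt0 le_sum; rewrite mulr1n.
- exact: ler_pdivl_nat.
Qed.

Lemma exp_centr_ge0 e u : 0 <= exp_centr lam e u.
Proof.
rewrite exp_centr_pairs; do 2 apply: sumr_ge0 => ? _.
by rewrite pair_centrE mulr_ge0 ?divr_ge0 ?exprn_ge0 ?lam_ge0.
Qed.

Lemma Mc_attained e (w0 : T) : exists w, Mc lam e = exp_centr lam e w.
Proof.
have [w _ Mc_w] := eq_bigmax w0 xpredT (exp_centr lam e) isT (fun w _ => exp_centr_ge0 e w).
by exists w.
Qed.

Lemma exp_centr_lt_star e u x y : symmetric e -> x != y -> u != x -> u != y -> e x y ->
  exp_centr lam e u < exp_centr lam (star u) u.
Proof.
move=> e_sym xy ux uy exy.
wlog rxy : x y xy ux uy exy / (enum_rank x < enum_rank y)%N.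
  move=> wlog_rxy; case: (ltngtP (enum_rank x) (enum_rank y)) => [|ryx|].
  - exact: wlog_rxy.
  - by apply: (wlog_rxy y x); rewrite // 1?eq_sym // e_sym.
  - by move/val_inj/enum_rank_inj => x_eq_y; rewrite x_eq_y eqxx in xy.
rewrite !exp_centr_pairs [ltLHS]pair_big_dep [ltRHS]pair_big_dep.
rewrite [ltLHS](bigD1 (x, y)) // [ltRHS](bigD1 (x, y)) //=.
rewrite pair_centr_edge // pair_centr_star // ltr_leD ?pair_bound_gt0 //.
apply: ler_sum => -[k l] /andP[rkl _].
have kl : k != l by apply: contraTneq rkl => ->; rewrite ltnn.
by rewrite pair_centr_star ?pair_centr_le_bound.
Qed.

End PairContributions.

Lemma ucycle_edge_avoiding (T : eqType) (e : rel T) (c : seq T) w :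
  (2 < size c)%N -> ucycleb e c -> exists x y, [/\ x != y, w != x, w != y & e x y].
Proof.
case: c => [|a [|b [|c r]]] //= _ /andP[].
rewrite /cycle rcons_path /= => /andP[/and3P[eab ebc _] e_last_a] /and3P[a_bcr b_cr _].
have ab : a != b by apply: contraNneq a_bcr => ->; rewrite inE eqxx.
have bc : b != c by apply: contraNneq b_cr => ->; rewrite inE eqxx.
have ac : a != c by apply: contraNneq a_bcr => ->; rewrite !inE eqxx orbT.
have la : last c r != a by apply: contraNneq a_bcr => <-; rewrite inE mem_last orbT.
have lb : last c r != b by apply: contraNneq b_cr => <-; rewrite mem_last.
have [->|wa] := eqVneq w a; first by exists b, c.
have [->|wb] := eqVneq w b; first by exists (last c r), a; split; rewrite // eq_sym.
by exists a, b.
Qed.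

Local Open Scope ring_scope.

Theorem lemma2 (R : realType) (lam : R) (n : nat) (e : rel 'I_n) :
  0 < lam < 1 -> (0 < n)%N ->
  simple_graph e -> connected_graph e ->
  (forall e' : rel 'I_n, simple_graph e' -> connected_graph e' ->
     Mc lam e' <= Mc lam e) ->
  is_tree e.
Proof.
move=> lam01 n_gt0 [e_sym _] e_conn e_max; split=> // -[c /andP[size_c cyc]].
have [w Mc_w] := Mc_attained lam01 e (Ordinal n_gt0).
have [x [y [xy wx wy exy]]] := ucycle_edge_avoiding w size_c cyc.
have := e_max _ (star_simple w) (star_connected w).
rewrite Mc_w leNgt => /negP; apply.
apply: lt_le_trans (exp_centr_lt_star lam01 e_sym xy wx wy exy) _.
exact: le_bigmax.
Qed.
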